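(* Let $0<s<1$ and let $\{\gamma_j\}_{j\in\mathbb N}$ be a non-increasing sequence with $1\ge\gamma_1$, $\gamma_j>0$ for all $j$, and $\lim_{j\to\infty}\gamma_j=0$. Then $$\lim_{\varepsilon\to0}\frac{d(\varepsilon)^{1-s}}{(\ln\varepsilon^{-1})^{s}}=0\quad\text{if and only if}\quad \lim_{j\to\infty}\frac{(\ln\frac1{\gamma_j})^{s}}{j^{1-s}}=\infty.$$
   Context: For $\varepsilon\in(0,1)$, $d(\varepsilon)=\max\{d\in\mathbb N:\gamma_d>\varepsilon^2\}$, with $d(\varepsilon)=0$ if $\gamma_1\le\varepsilon^2$. *)

From HB Require Import structures.
From mathcomp Require Import all_boot all_order all_algebra.
From mathcomp Require Import all_classical all_reals all_analysis.
Set Implicit Arguments. Unset Strict Implicit. Unset Printing Implicit Defensive.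
Import Order.TTheory GRing.Theory Num.Theory.
Local Open Scope ring_scope.
Local Open Scope classical_set_scope.

(* The sequence gamma is indexed by j >= 1; the value gamma 0 is ignored. *)

Definition is_d (R : realType) (gamma : nat -> R) (eps : R) (d : nat) : Prop :=
  ((d = 0)%N /\ gamma 1%N <= eps ^+ 2)
  \/ ((1 <= d)%N /\ eps ^+ 2 < gamma d /\
      (forall d' : nat, (1 <= d')%N -> eps ^+ 2 < gamma d' -> (d' <= d)%N)).

(* d(eps): the (unique, under the paper's hypotheses) d with [is_d gamma eps d];
   defaults to 0 if no such d exists. *)
Definition d_eps (R : realType) (gamma : nat -> R) (eps : R) : nat :=
  match pselect (exists d, is_d gamma eps d) with
  | left H => projT1 (cid H)
  | right _ => 0%N
  end.

From HB Require Import structures.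
From mathcomp Require Import all_boot all_order all_algebra.
From mathcomp Require Import all_classical all_reals all_analysis.
Import Order.TTheory GRing.Theory Num.Theory numFieldNormedType.Exports.
Local Open Scope ring_scope.
Local Open Scope classical_set_scope.

(* Write [r n x] for [log_ratio s n x = n^(1-s) / (ln 1/x)^s]: the left-hand side
   is [r (d eps) eps] and the right-hand side is [1 / r j gamma_j].  Since
   [gamma_j^2 < gamma_j] we have [j <= d gamma_j], hence
   [r j gamma_j <= r (d gamma_j) gamma_j]; since [gamma_(d eps) > eps^2] we have
   [ln (1/gamma_(d eps)) < 2 ln (1/eps)], hence [r (d eps) eps <= 2^s r (d eps) gamma_(d eps)].
   As [gamma_j -> 0+] and [d eps -> oo] when [eps -> 0+], convergence to 0
   transfers both ways. *)

Lemma cvg_at_right_gt {T : Type} {F : set_system T} {FF : Filter F}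
    (R : realFieldType) (u : T -> R) (l : R) :
  (\forall x \near F, l < u x) -> u @ F --> l -> u @ F --> l^'+.
Proof. by move=> lu ul P /ul; apply: filterS2 lu => x lux /(_ lux). Qed.

Definition log_ratio {R : realType} (s : R) (n : nat) (x : R) : R :=
  n%:R `^ (1 - s) / ln x^-1 `^ s.

Section log_ratio_theory.
Variables (R : realType) (s : R).

Lemma log_ratio_ge0 (n : nat) (x : R) : 0 <= log_ratio s n x.
Proof. by rewrite divr_ge0 ?powR_ge0. Qed.

Lemma log_ratio_gt0 (n : nat) (x : R) :
  (0 < n)%N -> 0 < x -> x < 1 -> 0 < log_ratio s n x.
Proof.
move=> n_gt0 x_gt0 x_lt1; rewrite divr_gt0 // powR_gt0 ?ltr0n //.
by rewrite ln_gt0 // invf_gt1.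
Qed.

Lemma ler_log_ratio (m n : nat) (x : R) : s <= 1 -> (m <= n)%N ->
  log_ratio s m x <= log_ratio s n x.
Proof.
move=> s_le1 mn; rewrite ler_wpM2r ?invr_ge0 ?powR_ge0 // ge0_ler_powR //.
- by rewrite subr_ge0.
- by rewrite nnegrE ler0n.
- by rewrite nnegrE ler0n.
- by rewrite ler_nat.
Qed.

Lemma log_ratio_le_sqr (n : nat) (x y : R) : 0 <= s -> 0 < x ->
  x ^+ 2 < y -> y < 1 -> log_ratio s n x <= 2 `^ s * log_ratio s n y.
Proof.
move=> s_ge0 x_gt0 x2_lt_y y_lt1.
have y_gt0 : 0 < y by rewrite (lt_trans _ x2_lt_y) ?exprn_gt0.
have lny_gt0 : 0 < ln y^-1 by rewrite ln_gt0 // invf_gt1.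
have lny_le : ln y^-1 <= 2 * ln x^-1.
  rewrite !lnV ?posrE // mulrN mulr_natl -lnXn // lerN2 ltW // ltr_ln //.
  by rewrite posrE exprn_gt0.
have lnx_gt0 : 0 < ln x^-1.
  by move: (lt_le_trans lny_gt0 lny_le); rewrite pmulr_rgt0.
rewrite /log_ratio mulrCA ler_wpM2l ?powR_ge0 //.
rewrite ler_pdivlMr ?powR_gt0 // mulrC ler_pdivrMr ?powR_gt0 //.
rewrite -powRM ?ler0n ?(ltW lnx_gt0) // ge0_ler_powR // nnegrE ?(ltW lny_gt0) //.
by rewrite mulr_ge0 ?(ltW lnx_gt0).
Qed.

End log_ratio_theory.

Section d_eps_theory.
Variables (R : realType) (gamma : nat -> R).
Hypothesis gamma_noninc : forall j : nat, (1 <= j)%N -> gamma j.+1 <= gamma j.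
Hypothesis gamma_cvg0 : gamma @ \oo --> 0.

Lemma gamma_le (i j : nat) : (0 < i)%N -> (i <= j)%N -> gamma j <= gamma i.
Proof.
move=> i_gt0 /subnK <-; elim: (j - i)%N => [|k IH]; first by rewrite add0n.
by rewrite addSn (le_trans _ IH) // gamma_noninc // (leq_trans i_gt0) ?leq_addl.
Qed.

Lemma is_d_exists (eps : R) : 0 < eps -> exists d, is_d gamma eps d.
Proof.
move=> eps_gt0; have eps2_gt0 : 0 < eps ^+ 2 by rewrite exprn_gt0.
have [|gamma1_gt] := lerP (gamma 1%N) (eps ^+ 2); first by exists 0%N; left.
pose P d := (0 < d)%N && (eps ^+ 2 < gamma d).
have /cvgr_dist_lt/(_ _ eps2_gt0) [N _ gammaN] := gamma_cvg0.
have P_ub d : P d -> (d <= N)%N.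
  case/andP => _ gammad; rewrite leqNgt; apply/negP => /ltnW/gammaN.
  by rewrite sub0r normrN => /(le_lt_trans (ler_norm _)); rewrite ltNge ltW.
have [|d /andP[d_gt0 gammad] d_max] := ex_maxnP _ P_ub; first by exists 1%N.
by exists d; right; do 2!split=> //; move=> d' d'_gt0 ?; apply: d_max; apply/andP.
Qed.

Lemma d_eps_max (eps : R) (j : nat) : 0 < eps -> (0 < j)%N ->
  eps ^+ 2 < gamma j -> (j <= d_eps gamma eps)%N.
Proof.
move=> eps_gt0 j_gt0 gammaj; rewrite /d_eps; case: pselect => [ex|]; last first.
  by case; apply: is_d_exists.
case: cid => d /= [[_ gamma1]|[_ [_ ->]]] //.
by have := lt_le_trans gammaj (gamma_le _ _ (leqnn 1) j_gt0); rewrite ltNge gamma1.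
Qed.

Lemma d_eps_gt (eps : R) : 0 < eps -> (0 < d_eps gamma eps)%N ->
  eps ^+ 2 < gamma (d_eps gamma eps).
Proof.
move=> eps_gt0; rewrite /d_eps; case: pselect => // ex.
by case: cid => d /= [[-> _]|[_ []]].
Qed.

Hypothesis gamma_gt0 : forall j : nat, (1 <= j)%N -> 0 < gamma j.

Lemma d_eps_cvgy : d_eps gamma @ 0^'+ --> \oo.
Proof.
apply/cvgnyPge => N; near=> eps.
have eps_gt0 : 0 < eps by near: eps; exact: nbhs_right_gt.
have : eps < Num.min 1 (gamma N.+1).
  by near: eps; apply: nbhs_right_lt; rewrite lt_min ltr01 gamma_gt0.
rewrite lt_min => /andP[eps_lt1 eps_lt_gamma].
apply: (leq_trans (leqnSn N)); apply: d_eps_max => //.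
by rewrite (lt_trans _ eps_lt_gamma) // expr2 gtr_pMr.
Unshelve. all: by end_near.
Qed.

Lemma gamma_cvg_at_right : gamma @ \oo --> 0^'+.
Proof.
apply: cvg_at_right_gt gamma_cvg0.
by near=> j; apply: gamma_gt0; near: j; exact: nbhs_infty_ge.
Unshelve. all: by end_near.
Qed.

Lemma gamma_lt1 : \forall j \near \oo, gamma j < 1.
Proof. by apply: (cvgr_lt 0 gamma_cvg0); exact: ltr01. Qed.

Variable s : R.
Hypotheses (s_ge0 : 0 <= s) (s_le1 : s <= 1).

Lemma log_ratio_gamma_gt0 : \forall j \near \oo, 0 < log_ratio s j (gamma j).
Proof.
near=> j.
have j_gt0 : (0 < j)%N by near: j; exact: nbhs_infty_gt.
by rewrite log_ratio_gt0 ?gamma_gt0 //; near: j; exact: gamma_lt1.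
Unshelve. all: by end_near.
Qed.

Lemma log_ratio_gamma_cvg0 :
  log_ratio s (d_eps gamma eps) eps @[eps --> 0^'+] --> 0 ->
  log_ratio s j (gamma j) @[j --> \oo] --> 0.
Proof.
move=> /(cvg_comp _ _ gamma_cvg_at_right) ratio_cvg0.
apply: (squeeze_cvgr _ (cvg_cst 0) ratio_cvg0); near=> j.
have j_gt0 : (0 < j)%N by near: j; exact: nbhs_infty_gt.
have gammaj_gt0 := gamma_gt0 _ j_gt0.
have gammaj_lt1 : gamma j < 1 by near: j; exact: gamma_lt1.
rewrite log_ratio_ge0 ler_log_ratio //= d_eps_max // expr2 gtr_pMr //.
Unshelve. all: by end_near.
Qed.

Lemma log_ratio_d_eps_cvg0 :
  log_ratio s j (gamma j) @[j --> \oo] --> 0 ->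
  log_ratio s (d_eps gamma eps) eps @[eps --> 0^'+] --> 0.
Proof.
move=> /(cvg_comp _ _ d_eps_cvgy)/(cvgM (cvg_cst (2 `^ s))); rewrite mulr0 => ratio_cvg0.
apply: (squeeze_cvgr _ (cvg_cst 0) ratio_cvg0); near=> eps.
have eps_gt0 : 0 < eps by near: eps; exact: nbhs_right_gt.
have d_gt0 : (0 < d_eps gamma eps)%N.
  by near: eps; move/cvgnyPgt: d_eps_cvgy; apply.
have gamma_d_lt1 : gamma (d_eps gamma eps) < 1.
  by near: eps; apply: (cvgr_lt 0 (cvg_comp _ _ d_eps_cvgy gamma_cvg0)); exact: ltr01.
by rewrite log_ratio_ge0 log_ratio_le_sqr ?d_eps_gt.
Unshelve. all: by end_near.
Qed.

End d_eps_theory.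

Theorem lemma3 (R : realType) (s : R) (gamma : nat -> R) :
  0 < s -> s < 1 ->
  (forall j : nat, (1 <= j)%N -> gamma j.+1 <= gamma j) ->
  gamma 1%N <= 1 ->
  (forall j : nat, (1 <= j)%N -> 0 < gamma j) ->
  gamma @ \oo --> 0 ->
  ((fun eps : R => ((d_eps gamma eps)%:R `^ (1 - s)) / (ln eps^-1 `^ s))
      @ 0^'+ --> 0)
  <->
  ((fun j : nat => (ln (gamma j)^-1 `^ s) / (j%:R `^ (1 - s))) @ \oo --> +oo).
Proof.
move=> s_gt0 s_lt1 gamma_noninc _ gamma_gt0 gamma_cvg0.
have [s_ge0 s_le1] : 0 <= s /\ s <= 1 by split; apply: ltW.
have -> : (fun j : nat => ln (gamma j)^-1 `^ s / j%:R `^ (1 - s)) =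
          (fun j : nat => (log_ratio s j (gamma j))^-1).
  by apply/funext => j; rewrite /= invf_div.
rewrite cvgrVy; last exact: log_ratio_gamma_gt0.
split; [exact: log_ratio_gamma_cvg0 | exact: log_ratio_d_eps_cvg0].
Qed.
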